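(* Let $A,B\subseteq\mathbb{N}$ with $A\cap B=\emptyset$, $A\in\mathcal{D}$ and $\underline{\underline{d}}(B)=0$. Then $\underline{\underline{d}}(A\cup B)=d(A)$.
   Context: $\mathbb{N}=\{1,2,3,\dots\}$. For $A\subseteq\mathbb{N}$ let $A(n)=|A\cap[1,n]|$. Let $\mathcal{D}$ be the collection of all $A\subseteq\mathbb{N}$ for which the asymptotic density $d(A)=\lim_{n\to\infty}\frac{A(n)}{n}$ exists. Define $\underline{\underline{d}}(A)=\sup\{d(B);\ B\subseteq A,\ B\in\mathcal{D}\}$. *)

(* Subsets of N = {1,2,3,...} are represented
   by boolean predicates A : nat -> bool; the value at 0 is ignored
   (all counting is over [1,n]). *)
From Stdlib Require Import Reals.
From Coquelicot Require Import Coquelicot.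
Open Scope R_scope.

Fixpoint cnt (A : nat -> bool) (n : nat) : nat :=
  match n with
  | O => O
  | S m => (if A (S m) then 1 else 0) + cnt A m
  end%nat.

Definition has_density (A : nat -> bool) (a : R) : Prop :=
  is_lim_seq (fun n => INR (cnt A n) / INR n) a.

Definition in_D (A : nat -> bool) : Prop := exists a, has_density A a.

Definition subsetN (B A : nat -> bool) : Prop :=
  forall k, (1 <= k)%nat -> B k = true -> A k = true.

Definition ldd (A : nat -> bool) : Rbar :=
  Lub_Rbar (fun x => exists B, subsetN B A /\ has_density B x).

(* Since A ⊆ A ∪ B, the value d(A) is attained.  Conversely, let C ⊆ A ∪ B
   have density c > d(A).  On every interval (m, n] the set C ∩ B then gains
   about (c - d(A))(n - m) elements, up to an error o(n).  Picking elements of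
   C ∩ B greedily, as long as the count stays below (c - d(A)) n, yields a
   subset of B of density c - d(A) > 0, contradicting that every subset of B
   with a density has density 0. *)
From Stdlib Require Import Reals Lra Lia Arith.
From Coquelicot Require Import Coquelicot.
Open Scope R_scope.

Lemma cnt_le (X : nat -> bool) (n : nat) : (cnt X n <= n)%nat.
Proof. induction n as [|n IH]; simpl; [lia|]. destruct (X (S n)); lia. Qed.

Lemma has_density_uniform (X : nat -> bool) (x : R) :
  has_density X x -> forall eps, 0 < eps -> exists K, 0 <= K /\
  forall m n, (m <= n)%nat -> Rabs (INR (cnt X m) - x * INR m) <= eps * INR n + K.
Proof.
  intros HX eps Heps.
  apply is_lim_seq_spec in HX. destruct (HX (mkposreal eps Heps)) as [N HN].
  assert (HK : 0 <= INR N * (1 + Rabs x)).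
  { apply Rmult_le_pos; [apply pos_INR | pose proof (Rabs_pos x); lra]. }
  exists (INR N * (1 + Rabs x)). split; [exact HK|].
  intros m n Hmn.
  assert (Hmn' : INR m <= INR n) by (apply le_INR; exact Hmn).
  assert (Hm0 : 0 <= INR m) by apply pos_INR.
  destruct (le_lt_dec N m) as [HNm | HmN].
  - destruct m as [|m']; [simpl; rewrite Rmult_0_r, Rminus_0_r, Rabs_R0; nra|].
    specialize (HN (S m') HNm). cbn [pos] in HN.
    assert (Hm : 0 < INR (S m')) by (apply lt_0_INR; lia).
    replace (INR (cnt X (S m')) - x * INR (S m'))
      with (INR (S m') * (INR (cnt X (S m')) / INR (S m') - x)) by (field; lra).
    rewrite Rabs_mult, (Rabs_right (INR (S m'))) by lra.
    pose proof (Rabs_pos (INR (cnt X (S m')) / INR (S m') - x)). nra.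
  - assert (Hc : INR (cnt X m) <= INR m) by apply le_INR, cnt_le.
    assert (Hc0 : 0 <= INR (cnt X m)) by apply pos_INR.
    assert (HmN' : INR m <= INR N) by (apply le_INR; lia).
    eapply Rle_trans; [apply Rabs_triang|].
    rewrite Rabs_Ropp, Rabs_mult, (Rabs_right (INR m)), Rabs_right by lra.
    pose proof (Rabs_pos x). nra.
Qed.

Lemma has_density_of_uniform (X : nat -> bool) (x : R) :
  (forall eps, 0 < eps -> exists K,
     forall n, Rabs (INR (cnt X n) - x * INR n) <= eps * INR n + K) ->
  has_density X x.
Proof.
  intros Hunif. apply is_lim_seq_spec. intros [eps Heps]. cbn [pos].
  destruct (Hunif (eps / 2) ltac:(lra)) as [K HK].
  destruct (INR_unbounded (2 * Rabs K / eps)) as [N HN].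
  exists (S N). intros n Hn.
  assert (Hn0 : 0 < INR n) by (apply lt_0_INR; lia).
  assert (HnN : INR N < INR n) by (apply lt_INR; lia).
  assert (HKn : Rabs K < eps / 2 * INR n).
  { apply Rmult_lt_compat_r with (r := eps / 2) in HN; [|lra].
    replace (2 * Rabs K / eps * (eps / 2)) with (Rabs K) in HN by (field; lra).
    nra. }
  replace (INR (cnt X n) / INR n - x)
    with ((INR (cnt X n) - x * INR n) / INR n) by (field; lra).
  unfold Rdiv. rewrite Rabs_mult, (Rabs_right (/ INR n))
    by (apply Rle_ge, Rlt_le, Rinv_0_lt_compat; lra).
  apply Rmult_lt_reg_r with (r := INR n); [lra|].
  rewrite Rmult_assoc, Rinv_l, Rmult_1_r by lra.
  specialize (HK n). pose proof (Rle_abs K). lra.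
Qed.

Lemma cnt_increment_le_union (A B C : nat -> bool) :
  subsetN C (fun k => orb (A k) (B k)) -> forall m k,
  INR (cnt C (m + k)) - INR (cnt C m) <=
  INR (cnt A (m + k)) - INR (cnt A m) +
  (INR (cnt (fun j => andb (C j) (B j)) (m + k)) - INR (cnt (fun j => andb (C j) (B j)) m)).
Proof.
  intros HC m k. induction k as [|k IH]; [rewrite Nat.add_0_r; lra|].
  rewrite Nat.add_succ_r. simpl cnt. rewrite !plus_INR.
  specialize (HC (S (m + k)) ltac:(lia)).
  destruct (C (S (m + k))), (A (S (m + k))), (B (S (m + k)));
    cbn [andb orb] in *; try discriminate (HC eq_refl); simpl (INR 1); simpl (INR 0); lra.
Qed.

Lemma cnt_increment_ge_density_gap (A B C : nat -> bool) (a c : R) :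
  subsetN C (fun k => orb (A k) (B k)) -> has_density A a -> has_density C c ->
  forall eps, 0 < eps -> exists K, forall m n, (m <= n)%nat ->
  (c - a) * (INR n - INR m) - eps * INR n - K <=
  INR (cnt (fun j => andb (C j) (B j)) n) - INR (cnt (fun j => andb (C j) (B j)) m).
Proof.
  intros HC HA Hc eps Heps.
  destruct (has_density_uniform A a HA (eps / 4) ltac:(lra)) as [KA [_ HKA]].
  destruct (has_density_uniform C c Hc (eps / 4) ltac:(lra)) as [KC [_ HKC]].
  exists (2 * (KA + KC)). intros m n Hmn.
  pose proof (cnt_increment_le_union A B C HC m (n - m)) as Hinc.
  replace (m + (n - m))%nat with n in Hinc by lia.
  pose proof (HKA n n (le_n n)) as A1. pose proof (HKA m n Hmn) as A2.
  pose proof (HKC n n (le_n n)) as C1. pose proof (HKC m n Hmn) as C2.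
  apply Rabs_le_between in A1, A2, C1, C2. lra.
Qed.

Fixpoint greedy_cnt (D : nat -> bool) (d : R) (n : nat) : nat :=
  match n with
  | O => O
  | S m =>
      ((if andb (D (S m)) (if Rle_dec (INR (greedy_cnt D d m) + 1) (d * INR (S m))
                       then true else false)
        then 1 else 0) + greedy_cnt D d m)%nat
  end.

Definition greedy (D : nat -> bool) (d : R) (k : nat) : bool :=
  match k with
  | O => false
  | S m => andb (D (S m)) (if Rle_dec (INR (greedy_cnt D d m) + 1) (d * INR (S m))
                       then true else false)
  end.

Lemma cnt_greedy (D : nat -> bool) (d : R) (n : nat) :
  cnt (greedy D d) n = greedy_cnt D d n.
Proof. induction n as [|n IH]; simpl; [reflexivity|]. rewrite IH. reflexivity. Qed.

Lemma greedy_subset (D : nat -> bool) (d : R) : subsetN (greedy D d) D.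
Proof.
  intros [|k] Hk Hg; [lia|]. apply andb_prop in Hg. tauto.
Qed.

Lemma cnt_greedy_le (D : nat -> bool) (d : R) (n : nat) :
  0 <= d -> INR (cnt (greedy D d) n) <= d * INR n.
Proof.
  intros Hd. rewrite cnt_greedy. induction n as [|n IH]; [simpl; lra|].
  cbn [greedy_cnt]. rewrite S_INR in *.
  destruct (D (S n)); [destruct (Rle_dec _ _)|]; cbn [andb];
    rewrite ?plus_INR; simpl (INR 1); simpl (INR 0); lra.
Qed.

(* [m] is the last time the budget was exhausted; after it every element of
   [D] is taken. *)
Lemma cnt_greedy_ge (D : nat -> bool) (d : R) (n : nat) :
  exists m, (m <= n)%nat /\
  d * INR m - 2 + (INR (cnt D n) - INR (cnt D m)) <= INR (cnt (greedy D d) n).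
Proof.
  rewrite cnt_greedy. induction n as [|n IH]; [exists O; simpl; split; [lia | lra]|].
  destruct IH as [m [Hm IH]].
  destruct (Rle_dec (INR (greedy_cnt D d (S n)) + 1) (d * INR (S n))) as [Hroom | Hfull].
  - exists m. split; [lia|].
    cbn [cnt greedy_cnt] in *. rewrite !plus_INR in *.
    destruct (D (S n)); [destruct (Rle_dec _ _)|]; cbn [andb] in *;
      simpl (INR 1) in *; simpl (INR 0) in *; lra.
  - exists (S n). split; [lia | lra].
Qed.

Lemma greedy_has_density (D : nat -> bool) (d : R) : 0 <= d ->
  (forall eps, 0 < eps -> exists K, forall m n, (m <= n)%nat ->
     d * (INR n - INR m) - eps * INR n - K <= INR (cnt D n) - INR (cnt D m)) ->
  has_density (greedy D d) d.
Proof.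
  intros Hd Hinc. apply has_density_of_uniform. intros eps Heps.
  destruct (Hinc eps Heps) as [K HK]. exists (Rabs K + 2). intros n.
  pose proof (cnt_greedy_le D d n Hd) as Hup.
  destruct (cnt_greedy_ge D d n) as [m [Hmn Hlow]].
  specialize (HK m n Hmn).
  pose proof (pos_INR n). pose proof (Rle_abs K).
  rewrite Rabs_left1 by lra. lra.
Qed.

Lemma density_le_ldd (B E : nat -> bool) (x : R) :
  subsetN E B -> has_density E x -> Rbar_le x (ldd B).
Proof.
  intros HE Hx. apply (proj1 (Lub_Rbar_correct _)). exists E. split; assumption.
Qed.

Lemma density_le_of_subset_union (A B C : nat -> bool) (a c : R) :
  has_density A a -> ldd B = Finite 0 ->
  subsetN C (fun k => orb (A k) (B k)) -> has_density C c -> c <= a.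
Proof.
  intros HA HB HC Hc. apply Rnot_lt_le. intros Hlt.
  set (D := fun j => andb (C j) (B j)).
  assert (HE : has_density (greedy D (c - a)) (c - a)).
  { apply greedy_has_density; [lra|].
    exact (cnt_increment_ge_density_gap A B C a c HC HA Hc). }
  assert (HEB : subsetN (greedy D (c - a)) B).
  { intros k Hk Hg. apply greedy_subset in Hg; [|exact Hk].
    apply andb_prop in Hg. tauto. }
  pose proof (density_le_ldd B _ _ HEB HE) as Hle.
  rewrite HB in Hle. simpl in Hle. lra.
Qed.

Theorem lemma3p8 (A B : nat -> bool) (a : R) :
  (forall k, (1 <= k)%nat -> ~ (A k = true /\ B k = true)) ->
  has_density A a ->
  ldd B = Finite 0 ->
  ldd (fun k => orb (A k) (B k)) = Finite a.
Proof.
  intros _ HA HB. apply is_lub_Rbar_unique. split.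
  - intros x [C [HC Hc]]. exact (density_le_of_subset_union A B C a x HA HB HC Hc).
  - intros b Hb. apply Hb. exists A. split; [|exact HA].
    intros k _ Ak. rewrite Ak. reflexivity.
Qed.
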